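(* Let $0<\theta<\frac{\pi}{4}$ and let $N\ge 2$ be an integer. Let $|\psi_{\mathrm{GGHZ}}\rangle=\cos\theta|000\rangle+\sin\theta|111\rangle$ and $|\psi_{\mathrm{GHZ}}\rangle=\frac{1}{\sqrt2}(|000\rangle+|111\rangle)$ be three-qubit states on $\mathcal H_A\otimes\mathcal H_B\otimes\mathcal H_C$. For $x\in\{0,1,2\}$ and $a\in\{0,1\}$ let $P_{a|x}$ be the projector onto the eigenvector of $\sigma_x$ (if $x=0$), $\sigma_y$ (if $x=1$), $\sigma_z$ (if $x=2$) with eigenvalue $(-1)^a$. Define the assemblages on Charlie $$\sigma^{\mathrm{GGHZ}}_{a,b|x,y}=\mathrm{Tr}_{AB}\big[(P_{a|x}\otimes P_{b|y}\otimes\mathbb 1)|\psi_{\mathrm{GGHZ}}\rangle\langle\psi_{\mathrm{GGHZ}}|\big],\quad \sigma^{\mathrm{GHZ}}_{a,b|x,y}=\mathrm{Tr}_{AB}\big[(P_{a|x}\otimes P_{b|y}\otimes\mathbb 1)|\psi_{\mathrm{GHZ}}\rangle\langle\psi_{\mathrm{GHZ}}|\big]$$ for $a,b\in\{0,1\}$, $x,y\in\{0,1,2\}$. Let $P_{\mathrm{fail}}=(1-2\sin^2\theta)^{N-1}$, $P_{\mathrm{success}}=1-P_{\mathrm{fail}}$, and $\sigma^{\mathrm{dist}}_{a,b|x,y}=P_{\mathrm{success}}\,\sigma^{\mathrm{GHZ}}_{a,b|x,y}+P_{\mathrm{fail}}\,\sigma^{\mathrm{GGHZ}}_{a,b|x,y}$,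 the assemblage obtained on average from $N$ copies of $\{\sigma^{\mathrm{GGHZ}}_{a,b|x,y}\}$ by the distillation protocol described in the context. Then $$\mathcal F_A\big(\{\sigma^{\mathrm{dist}}_{a,b|x,y}\},\{\sigma^{\mathrm{GHZ}}_{a,b|x,y}\}\big)=\sqrt{1-\tfrac12(1-\sin2\theta)(\cos2\theta)^{N-1}}.$$
   Context: $\sigma_x,\sigma_y,\sigma_z$ are the Pauli matrices in the computational basis. For positive semidefinite $A,B$, $\mathcal F(A,B)=\mathrm{Tr}\big[\sqrt{\sqrt A B\sqrt A}\big]$. For two-sided assemblages $\{\sigma_{a,b|x,y}\}$, $\{\tau_{a,b|x,y}\}$ the assemblage fidelity is $\mathcal F_A=\min_{x,y}\sum_{a,b}\mathcal F(\sigma_{a,b|x,y},\tau_{a,b|x,y})$ (components of zero trace contribute $0$). Distillation protocol (two-sided device-independent setting: Alice and Bob untrusted, Charlie trusted): on each of the first $N-1$ copies Charlie applies the filter with Kraus operators $K_0=\mathrm{diag}(\tan\theta,1)$, $K_1=\mathrm{diag}(\sqrt{1-\tan^2\theta},0)$; outcome $0$ (probability $2\sin^2\theta$ per copy) turns the copy into $\{\sigma^{\mathrm{GHZ}}_{a,b|x,y}\}$; copies with outcome $1$ are discarded and if all fail the untouched $N$-th copy is kept, so the average output is the convex combination $\sigma^{\mathrm{dist}}$ of the claim. *)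

From HB Require Import structures.
From mathcomp Require Import all_boot all_order all_algebra.
From mathcomp Require Import complex.
From mathcomp Require Import boolp reals trigo.

Set Implicit Arguments.
Unset Strict Implicit.
Unset Printing Implicit Defensive.

Import Order.TTheory GRing.Theory Num.Theory.
Local Open Scope ring_scope.
Local Open Scope complex_scope.
Local Open Scope sesquilinear_scope.

Section QuantumDefs.
Variable R : realType.
Local Notation C := R[i].

Definition pauli (x : 'I_3) : 'M[C]_2 :=
  match val x with
  | 0%N => \matrix_(i, j) (if i == j then 0 else 1)
  | 1%N => \matrix_(i, j) (if i == j then 0
                           else if val i == 0%N then - 'i else 'i)
  | _ => \matrix_(i, j) (if i == j then (if val i == 0%N then 1 else -1)
                         else 0)
  end.

Definition proj (a : 'I_2) (x : 'I_3) : 'M[C]_2 :=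
  (2%:R)^-1 *: (1%:M + ((-1) ^+ a) *: pauli x).

(* Three-qubit space H_A (x) H_B (x) H_C with computational basis indexed
   by triples (i, j, k). Vectors are functions Idx3 -> C, operators are
   functions Idx3 -> Idx3 -> C (matrix entries). *)
Definition Idx3 : finType := ('I_2 * 'I_2 * 'I_2)%type.

Definition ket000_111 (c s : C) (p : Idx3) : C :=
  let '(i, j, k) := p in
  if (val i == 0%N) && (val j == 0%N) && (val k == 0%N) then c
  else if (val i == 1%N) && (val j == 1%N) && (val k == 1%N) then s
  else 0.

Definition psi_GGHZ (theta : R) : Idx3 -> C :=
  ket000_111 (cos theta)%:C (sin theta)%:C.

Definition psi_GHZ : Idx3 -> C :=
  ket000_111 ((Num.sqrt (2 : R))^-1)%:C ((Num.sqrt (2 : R))^-1)%:C.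

Definition dens (psi : Idx3 -> C) : Idx3 -> Idx3 -> C :=
  fun p q => psi p * (psi q)^*.

Definition kron3 (A B D : 'M[C]_2) : Idx3 -> Idx3 -> C :=
  fun p q => let '(i, j, k) := p in let '(i', j', k') := q in
             A i i' * B j j' * D k k'.

Definition opmul (X Y : Idx3 -> Idx3 -> C) : Idx3 -> Idx3 -> C :=
  fun p q => \sum_(r : Idx3) X p r * Y r q.

Definition ptrAB (X : Idx3 -> Idx3 -> C) : 'M[C]_2 :=
  \matrix_(k, l) \sum_(i : 'I_2) \sum_(j : 'I_2) X (i, j, k) (i, j, l).

Definition assemblage := 'I_2 -> 'I_2 -> 'I_3 -> 'I_3 -> 'M[C]_2.

Definition assemblage_of (psi : Idx3 -> C) : assemblage :=
  fun a b x y => ptrAB (opmul (kron3 (proj a x) (proj b y) 1%:M) (dens psi)).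

Definition sigma_GGHZ (theta : R) : assemblage := assemblage_of (psi_GGHZ theta).
Definition sigma_GHZ : assemblage := assemblage_of psi_GHZ.

Definition P_fail (theta : R) (N : nat) : R := (1 - 2 * sin theta ^+ 2) ^+ N.-1.
Definition P_success (theta : R) (N : nat) : R := 1 - P_fail theta N.

Definition sigma_dist (theta : R) (N : nat) : assemblage :=
  fun a b x y => (P_success theta N)%:C *: sigma_GHZ a b x y
               + (P_fail theta N)%:C *: sigma_GGHZ theta a b x y.

Definition psdmx n (A : 'M[C]_n) : Prop :=
  A ^t* = A /\ forall v : 'cV[C]_n, 0 <= (v ^t* *m A *m v) 0 0.

(* the (unique) positive semidefinite square root of a PSD matrix;
   defaults to 0 when no PSD square root exists *)
Definition sqrtmx n (A : 'M[C]_n) : 'M[C]_n :=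
  match pselect (exists S : 'M[C]_n, psdmx S /\ S *m S = A) with
  | left h => proj1_sig (cid h)
  | right _ => 0
  end.

(* F(A, B) = Tr sqrt(sqrt A B sqrt A); the trace of a PSD matrix is real,
   we take its real part to get a value in R *)
Definition fidelity n (A B : 'M[C]_n) : R :=
  complex.Re (\tr (sqrtmx (sqrtmx A *m B *m sqrtmx A))).

(* F_A = min_{x,y} sum_{a,b} F(sigma_{ab|xy}, tau_{ab|xy}),
   zero-trace components contribute 0 *)
Definition fid_term (s t : assemblage) (xy : 'I_3 * 'I_3) : R :=
  \sum_(a : 'I_2) \sum_(b : 'I_2)
    (if (\tr (s a b xy.1 xy.2) == 0) || (\tr (t a b xy.1 xy.2) == 0) then 0
     else fidelity (s a b xy.1 xy.2) (t a b xy.1 xy.2)).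

Definition assemblage_fidelity (s t : assemblage) : R :=
  \big[Num.min/fid_term s t (ord0, ord0)]_(xy : 'I_3 * 'I_3) fid_term s t xy.

End QuantumDefs.

(* Every component of the GHZ assemblage is rank one, sigma^GHZ_{ab|xy} = g g^*,
   and likewise sigma^GGHZ_{ab|xy} = h h^*.  The fidelity of A with a rank-one
   matrix g g^* collapses to sqrt(g^* A g), because the positive square root of
   v v^* is v v^* / |v|; the square root of the 2x2 positive matrix
   A = P_s g g^* + P_f h h^* exists by Cayley-Hamilton.  Each summand is then
   sqrt(P_s |g|^4 + P_f |<g, h>|^2), which depends on the settings only through
   the weights q_k = |<k|e_{a|x}>|^2 |<k|e_{b|y}>|^2.  For sigma_x and sigma_y
   all q_k equal 1/4, while a sigma_z setting concentrates the weight on k = a;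
   the inequality sqrt(A + B + w) <= sqrt A + sqrt B (for w^2 <= 4AB) shows that
   this can only increase the sum.  So the minimum is attained at x = y = sigma_x,
   where the sum equals sqrt(P_s + P_f (cos theta + sin theta)^2 / 2). *)

From HB Require Import structures.
From mathcomp Require Import all_boot all_order all_algebra.
From mathcomp Require Import complex.
From mathcomp Require Import boolp reals trigo.
From mathcomp Require Import ring lra.
Import Order.TTheory GRing.Theory Num.Theory.
Set Implicit Arguments.
Unset Strict Implicit.
Unset Printing Implicit Defensive.
Local Open Scope ring_scope.
Local Open Scope complex_scope.
Local Open Scope sesquilinear_scope.
Local Notation Re := complex.Re.
Local Notation Im := complex.Im.

Section PositiveMatrices.
Variable R : realType.
Local Notation C := R[i].

Lemma ge0_complex (x : C) : 0 <= x -> x = (Re x)%:C /\ 0 <= Re x.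
Proof. by case: x => a b; rewrite lecE /= => /andP[/eqP -> ->]. Qed.

Lemma conj_real_complex (r : R) : Num.conj r%:C = r%:C :> C.
Proof. exact: conjc_real. Qed.

Lemma trmxC_mul m n p (A : 'M[C]_(m, n)) (B : 'M[C]_(n, p)) :
  (A *m B)^t* = B^t* *m A^t*.
Proof. by rewrite trmx_mul map_mxM. Qed.

Lemma trmxCZ m n (a : C) (A : 'M[C]_(m, n)) : (a *: A)^t* = a^* *: A^t*.
Proof. by rewrite linearZ /= map_mxZ. Qed.

Lemma gram_diag_ge0 m n (M : 'M[C]_(m, n)) j : 0 <= (M^t* *m M) j j.
Proof. by rewrite mxE; apply: sumr_ge0 => i _; rewrite !mxE mulrC mulcJ_ge0. Qed.

Lemma gram_diag_eq0 m n (M : 'M[C]_(m, n)) :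
  (forall j, (M^t* *m M) j j = 0) -> M = 0.
Proof.
move=> M0; apply/matrixP => i j; rewrite mxE.
have Mj0 : \sum_k M k j * (M k j)^* = 0.
  by move: (M0 j); rewrite mxE; under eq_bigr do rewrite !mxE mulrC.
have /eqP := psumr_eq0P (fun k _ => mulcJ_ge0 _) Mj0 (i := i) isT.
by rewrite mulf_eq0 conjc_eq0 orbb => /eqP.
Qed.

Definition sqnorm n (w : 'cV[C]_n) : R := Re ((w^t* *m w) 0 0).

Lemma sqnormE n (w : 'cV[C]_n) : w^t* *m w = (sqnorm w)%:C%:M.
Proof. by rewrite [LHS]mx11_scalar -(ge0_complex (gram_diag_ge0 w 0)).1. Qed.

Lemma sqnorm_ge0 n (w : 'cV[C]_n) : 0 <= sqnorm w.
Proof. exact: (ge0_complex (gram_diag_ge0 w 0)).2. Qed.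

Lemma sqnorm_eq0 n (w : 'cV[C]_n) : sqnorm w = 0 -> w = 0.
Proof. by move=> w0; apply: gram_diag_eq0 => j; rewrite (ord1 j) sqnormE w0 mxE. Qed.

Lemma mxtrace_outer n (w : 'cV[C]_n) : \tr (w *m w^t*) = (sqnorm w)%:C.
Proof. by rewrite mxtrace_mulC sqnormE mxtrace_scalar. Qed.

Lemma outer_mulmx n (w v : 'cV[C]_n) : w *m w^t* *m v = (w^t* *m v) 0 0 *: w.
Proof. by rewrite -mulmxA {1}[w^t* *m v]mx11_scalar mul_mx_scalar. Qed.

Lemma psdmx_add n (A B : 'M[C]_n) : psdmx A -> psdmx B -> psdmx (A + B).
Proof.
move=> [hA pA] [hB pB]; split; first by rewrite linearD /= map_mxD hA hB.
by move=> v; rewrite mulmxDr mulmxDl mxE addr_ge0.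
Qed.

Lemma psdmx_scale n (k : R) (A : 'M[C]_n) : 0 <= k -> psdmx A -> psdmx (k%:C *: A).
Proof.
move=> k0 [hA pA]; split; first by rewrite trmxCZ hA conj_real_complex.
by move=> v; rewrite -scalemxAr -scalemxAl mxE mulr_ge0 ?ler0c.
Qed.

Lemma psdmx1 n : psdmx (1%:M : 'M[C]_n).
Proof.
split; last by move=> v; rewrite mulmx1 gram_diag_ge0.
by apply/matrixP => i j; rewrite !mxE eq_sym; case: eqP; rewrite ?conjC1 ?conjC0.
Qed.

Lemma psdmx_outer n (w : 'cV[C]_n) : psdmx (w *m w^t*).
Proof.
split; first by rewrite trmxC_mul trmxCK.
move=> v; suff -> : v^t* *m (w *m w^t*) *m v = (w^t* *m v)^t* *m (w^t* *m v).
  exact: gram_diag_ge0.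
by rewrite trmxC_mul trmxCK !mulmxA.
Qed.

Lemma scale_outer n (k : R) (g : 'cV[C]_n) : 0 <= k ->
  k%:C *: (g *m g^t*) = ((Num.sqrt k)%:C *: g) *m ((Num.sqrt k)%:C *: g)^t*.
Proof.
move=> k0; rewrite trmxCZ conj_real_complex -scalemxAl -scalemxAr scalerA -rmorphM /=.
by rewrite -expr2 sqr_sqrtr.
Qed.

Lemma quad_form_outer n (g h : 'cV[C]_n) (p f : C) :
  (g^t* *m (p *: (g *m g^t*) + f *: (h *m h^t*)) *m g) 0 0 =
  p * (g^t* *m g) 0 0 ^+ 2 + f * ((g^t* *m h) 0 0 * (h^t* *m g) 0 0).
Proof.
rewrite mulmxDr mulmxDl -!scalemxAr -!scalemxAl !mulmxA.
rewrite -[g^t* *m g *m g^t* *m g]mulmxA -[g^t* *m h *m h^t* *m g]mulmxA.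
by rewrite !mxE 2!(big_ord1 _ (fun j => _)) !mxE expr2.
Qed.

End PositiveMatrices.

Lemma divr_sqrtr (R : rcfType) (x : R) : 0 <= x -> x / Num.sqrt x = Num.sqrt x.
Proof.
rewrite le0r => /predU1P[->|x0]; first by rewrite sqrtr0 mul0r.
by rewrite -{1}(sqr_sqrtr (ltW x0)) expr2 mulfK // gt_eqF ?sqrtr_gt0.
Qed.

Section RankOneSquareRoots.
Variables (R : realType) (n : nat).
Local Notation C := R[i].
Implicit Types (w : 'cV[C]_n) (S : 'M[C]_n).

Lemma outer_sqr w : (w *m w^t*) *m (w *m w^t*) = (sqnorm w)%:C *: (w *m w^t*).
Proof. by rewrite mulmxA outer_mulmx sqnormE mxE eqxx mulr1n scalemxAl. Qed.

Definition outer_root w : 'M[C]_n :=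
  ((Num.sqrt (sqnorm w))^-1)%:C *: (w *m w^t*).

Lemma outer_root_psd w : psdmx (outer_root w).
Proof. by apply: psdmx_scale; [rewrite invr_ge0 sqrtr_ge0 | apply: psdmx_outer]. Qed.

Lemma outer_root_sqr w : outer_root w *m outer_root w = w *m w^t*.
Proof.
have [/sqnorm_eq0 ->|r0] := eqVneq (sqnorm w) 0.
  by rewrite /outer_root !mul0mx scaler0 mul0mx.
have sr0 : Num.sqrt (sqnorm w) != 0 by rewrite sqrtr_eq0 -ltNge lt0r r0 sqnorm_ge0.
rewrite /outer_root -scalemxAl -scalemxAr outer_sqr !scalerA -!rmorphM /=.
by rewrite -{3}(sqr_sqrtr (sqnorm_ge0 w)) expr2 -invfM mulVf ?mulf_neq0 // scale1r.
Qed.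

Lemma mxtrace_outer_root w : \tr (outer_root w) = (Num.sqrt (sqnorm w))%:C.
Proof.
rewrite mxtraceZ mxtrace_outer -rmorphM /=.
by rewrite mulrC divr_sqrtr ?sqnorm_ge0.
Qed.

Lemma psd_sqrt_outer_eigen S w : psdmx S -> S *m S = w *m w^t* ->
  S *m w = (Num.sqrt (sqnorm w))%:C *: w.
Proof.
move=> [_ Spos] S2.
have [/sqnorm_eq0 ->|r0] := eqVneq (sqnorm w) 0; first by rewrite mulmx0 scaler0.
have [muE mu0] := ge0_complex (Spos w).
set mu := Re _ in muE mu0.
have rC0 : (sqnorm w)%:C != 0 :> C by rewrite (inj_eq (@complexI _)).
(* S commutes with S^2 = w w^*, so S w is proportional to w; the factor is
   then forced by S^2 w = |w|^2 w. *)
have Sw : S *m w = (mu / sqnorm w)%:C *: w.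
  have := congr1 (mulmx^~ w) (esym (mulmxA S S S)); rewrite S2 /=.
  rewrite -[w *m w^t* *m S *m w]mulmxA outer_mulmx -[S *m _ *m w]mulmxA outer_mulmx.
  rewrite [w^t* *m (S *m w)]mulmxA muE sqnormE mxE eqxx mulr1n.
  move=> /(congr1 (fun M => ((sqnorm w)%:C)^-1 *: M)).
  by rewrite -scalemxAr !scalerA mulVf // scale1r rmorphM fmorphV mulrC => ->.
have w0 : w != 0 by apply: contra_neq r0 => ->; rewrite /sqnorm mulmx0 mxE.
have e2 : (mu / sqnorm w) ^+ 2 = sqnorm w.
  have := congr1 (mulmx^~ w) S2; rewrite /= -mulmxA Sw -scalemxAr Sw scalerA.
  rewrite outer_mulmx sqnormE mxE eqxx -rmorphM => /eqP.
  by rewrite -subr_eq0 -scalerBl scaler_eq0 (negbTE w0) orbF subr_eq0 -expr2 => /eqP/complexI.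
by rewrite Sw -{2}e2 sqrtr_sqr ger0_norm // divr_ge0 ?sqnorm_ge0.
Qed.

Lemma outer_root_mulmx w : outer_root w *m w = (Num.sqrt (sqnorm w))%:C *: w.
Proof.
rewrite -scalemxAl outer_mulmx sqnormE mxE eqxx mulr1n scalerA -rmorphM /=.
by rewrite mulrC divr_sqrtr ?sqnorm_ge0.
Qed.

Lemma psd_sqrt_outer_uniq S w : psdmx S -> S *m S = w *m w^t* -> S = outer_root w.
Proof.
(* With P := outer_root w, both S P and P S equal S^2 = P^2, so (S - P)^2 = 0. *)
move=> Spsd S2; have Sw := psd_sqrt_outer_eigen Spsd S2.
have [Sh _] := Spsd; have [Ph _] := outer_root_psd w.
have P2 := outer_root_sqr w.
set P := outer_root w in Ph Sw P2 *.
have SP : S *m P = w *m w^t*.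
  by rewrite /P /outer_root -scalemxAr mulmxA Sw -outer_root_mulmx -mulmxA scalemxAr P2.
have PS : P *m S = w *m w^t*.
  by rewrite -{1}Ph -{1}Sh -trmxC_mul SP trmxC_mul trmxCK.
apply/eqP; rewrite -subr_eq0; apply/eqP/gram_diag_eq0 => j.
have -> : (S - P)^t* = S - P by rewrite -[in RHS]Sh -[in RHS]Ph -map_mxB -linearB.
by rewrite mulmxBl !mulmxBr S2 SP PS P2 !subrr mxE.
Qed.

End RankOneSquareRoots.

Section Fidelity.
Variables (R : realType) (n : nat).
Local Notation C := R[i].
Implicit Types (g : 'cV[C]_n) (A : 'M[C]_n).

Lemma sqrtmx_spec A : (exists S, psdmx S /\ S *m S = A) ->
  psdmx (sqrtmx A) /\ sqrtmx A *m sqrtmx A = A.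
Proof. by rewrite /sqrtmx; case: pselect => // SA _; exact: (proj2_sig (cid SA)). Qed.

Lemma sqrtmx_outer g : sqrtmx (g *m g^t*) = outer_root g.
Proof.
have [] := @sqrtmx_spec (g *m g^t*).
  by exists (outer_root g); split; [apply: outer_root_psd | apply: outer_root_sqr].
exact: psd_sqrt_outer_uniq.
Qed.

Lemma fidelity_outer A g : (exists S, psdmx S /\ S *m S = A) ->
  fidelity A (g *m g^t*) = Num.sqrt (Re ((g^t* *m A *m g) 0 0)).
Proof.
move=> /sqrtmx_spec[[Sh _] S2]; rewrite /fidelity.
set S := sqrtmx A in Sh S2 *.
have -> : S *m (g *m g^t*) *m S = (S *m g) *m (S *m g)^t*.
  by rewrite trmxC_mul Sh !mulmxA.
by rewrite sqrtmx_outer mxtrace_outer_root /sqnorm trmxC_mul Sh -S2 !mulmxA.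
Qed.

End Fidelity.

Lemma sum_ord2 (V : nmodType) (F : 'I_2 -> V) : \sum_(i < 2) F i = F 0 + F 1.
Proof. by rewrite big_ord_recl big_ord1; congr (F _ + F _); apply: val_inj. Qed.

Lemma ord2P (i : 'I_2) : i = 0 \/ i = 1.
Proof. by case: i => [[|[|//]]] ?; [left | right]; apply: val_inj. Qed.

Lemma eq_mx2 (T : Type) (M N : 'M[T]_2) : M 0 0 = N 0 0 -> M 0 1 = N 0 1 ->
  M 1 0 = N 1 0 -> M 1 1 = N 1 1 -> M = N.
Proof.
move=> e00 e01 e10 e11; apply/matrixP => i j.
by case: (ord2P i) => ->; case: (ord2P j) => ->.
Qed.

Section QuadraticSquareRoot.
Variable R : realType.
Local Notation C := R[i].

(* Used with t = tr A and d = sqrt (det A): the 2x2 formula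
   sqrt A = (A + sqrt (det A)) / sqrt (tr A + 2 sqrt (det A)). *)
Lemma psd_sqrt_quadratic n (A : 'M[C]_n) (t d : R) :
  psdmx A -> 0 <= t -> 0 <= d -> A *m A = t%:C *: A - (d ^+ 2)%:C *: 1%:M ->
  exists S, psdmx S /\ S *m S = A.
Proof.
move=> Apsd t0 d0 A2; have [Ah _] := Apsd.
have [td0|td_neq0] := eqVneq (t + 2 * d) 0.
  have [t_eq0 d_eq0] : t = 0 /\ d = 0 by split; lra.
  have A0 : A = 0.
    by apply: gram_diag_eq0 => j; rewrite Ah A2 t_eq0 d_eq0 expr0n /= !scale0r subr0 mxE.
  by exists A; split; rewrite // A0 mul0mx.
have sqA : (A + d%:C *: 1%:M) *m (A + d%:C *: 1%:M) = (t + 2 * d)%:C *: A.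
  rewrite mulmxDl !mulmxDr A2 -!scalemxAl -!scalemxAr !mulmx1 mul1mx.
  by apply/matrixP => i j; rewrite !mxE !rmorphD !rmorphM ?rmorphXn /=; ring.
set k := (Num.sqrt (t + 2 * d))^-1.
exists (k%:C *: (A + d%:C *: 1%:M)); split.
  apply: psdmx_scale; first by rewrite invr_ge0 sqrtr_ge0.
  by apply: psdmx_add => //; apply: psdmx_scale => //; apply: psdmx1.
rewrite -scalemxAl -scalemxAr sqA !scalerA -!rmorphM /= /k -expr2 exprVn sqr_sqrtr; last lra.
by rewrite mulVf // scale1r.
Qed.

(* Cayley-Hamilton: the determinant of u u^* + v v^* is |det [u v]|^2. *)
Lemma outer_sum2_sqr (u v : 'cV[C]_2) :
  let A := u *m u^t* + v *m v^t* in let delta := u 0 0 * v 1 0 - u 1 0 * v 0 0 in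
  A *m A = ((u^t* *m u) 0 0 + (v^t* *m v) 0 0) *: A - (delta * delta^*) *: 1%:M.
Proof.
rewrite /= !rmorphB !rmorphM /=; apply: eq_mx2;
by rewrite !mxE !sum_ord2 !mxE !big_ord1 !mxE /=; ring.
Qed.

Lemma outer_sum2_psd_sqrt (u v : 'cV[C]_2) :
  exists S, psdmx S /\ S *m S = u *m u^t* + v *m v^t*.
Proof.
set delta := u 0 0 * v 1 0 - u 1 0 * v 0 0.
apply: (@psd_sqrt_quadratic _ _ (sqnorm u + sqnorm v)
          (Num.sqrt (Re delta ^+ 2 + Im delta ^+ 2))).
- by apply: psdmx_add; apply: psdmx_outer.
- by rewrite addr_ge0 ?sqnorm_ge0.
- exact: sqrtr_ge0.
rewrite outer_sum2_sqr /= -/delta !sqnormE !mxE !eqxx !mulr1n -rmorphD.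
by rewrite rmorphXn /= -normc_def sqr_normc.
Qed.

Lemma fidelity_outer_sum2 (u v g : 'cV[C]_2) :
  (if (\tr (u *m u^t* + v *m v^t*) == 0) || (\tr (g *m g^t*) == 0) then 0
   else fidelity (u *m u^t* + v *m v^t*) (g *m g^t*)) =
  Num.sqrt (Re ((g^t* *m (u *m u^t* + v *m v^t*) *m g) 0 0)).
Proof.
case: ifP => [|_]; last exact/fidelity_outer/outer_sum2_psd_sqrt.
rewrite mxtraceD !mxtrace_outer -rmorphD !(inj_eq (@complexI _)) => /orP[|/eqP/sqnorm_eq0->].
  rewrite paddr_eq0 ?sqnorm_ge0 // => /andP[/eqP/sqnorm_eq0-> /eqP/sqnorm_eq0->].
  by rewrite !mul0mx addr0 mulmx0 mul0mx mxE sqrtr0.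
by rewrite mulmx0 mxE sqrtr0.
Qed.

End QuadraticSquareRoot.

Lemma sum_Idx3 (V : nmodType) (F : Idx3 -> V) :
  \sum_(r : Idx3) F r = \sum_(i < 2) \sum_(j < 2) \sum_(k < 2) F (i, j, k).
Proof.
rewrite (pair_bigA _ (fun i j => \sum_(k < 2) F (i, j, k))) /=.
rewrite (pair_bigA _ (fun p k => F (p.1, p.2, k))) /=.
by apply: eq_bigr => -[[i j] k] _.
Qed.

Section GHZAssemblages.
Variable R : realType.
Local Notation C := R[i].

Definition ket2 (c s : C) (k : 'I_2) : C := if val k == 0%N then c else s.

Lemma ptrAB_kron_ket (P Q : 'M[C]_2) (c s : C) :
  ptrAB (opmul (kron3 P Q 1%:M) (dens (ket000_111 c s))) =
  \matrix_(k, l) (P l k * Q l k * ket2 c s k * (ket2 c s l)^*).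
Proof.
apply/matrixP => k l; rewrite !mxE !sum_ord2 /opmul !sum_Idx3 !sum_ord2 /kron3 /dens /ket2 /=.
by case: (ord2P k) => ->; case: (ord2P l) => ->; rewrite !mxE /= ?conjc0; ring.
Qed.

Definition invsqrt2 : R := (Num.sqrt 2)^-1.

Lemma invsqrt2_sqr : invsqrt2 * invsqrt2 = 2^-1.
Proof. by rewrite /invsqrt2 -invfM -expr2 sqr_sqrtr // ler0n. Qed.

Definition eigvec (a : 'I_2) (x : 'I_3) : 'cV[C]_2 :=
  match val x with
  | 0%N => \col_k (if val k == 0%N then invsqrt2%:C else ((-1) ^+ a * invsqrt2)%:C)
  | 1%N => \col_k (if val k == 0%N then invsqrt2%:C else 'i * ((-1) ^+ a * invsqrt2)%:C)
  | _ => \col_k (if val k == val a then 1 else 0)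
  end.

Lemma proj_eigvec a x : proj R a x = eigvec a x *m (eigvec a x)^t*.
Proof.
have i2 := invsqrt2_sqr.
have inv2 : (2%:R : C)^-1 = (2^-1 : R)%:C by rewrite fmorphV rmorph_nat.
case: x => [[|[|[|//]]] ?]; case: a => [[|[|//]] ?];
  rewrite /proj /eigvec /pauli /=; apply: eq_mx2;
  rewrite !mxE big_ord1 !mxE /= ?expr0 ?expr1 ?inv2;
  by apply/eqP; rewrite eq_complex /=; apply/andP; split; apply/eqP; lra.
Qed.

Definition steered (c s : C) a b x y : 'cV[C]_2 :=
  \col_k (ket2 c s k * (eigvec a x k 0)^* * (eigvec b y k 0)^*).

Lemma assemblage_of_ket (c s : C) a b x y :
  assemblage_of (ket000_111 c s) a b x y = steered c s a b x y *m (steered c s a b x y)^t*.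
Proof.
rewrite /assemblage_of ptrAB_kron_ket !proj_eigvec.
by apply/matrixP => k l; rewrite !mxE !big_ord1 !mxE !rmorphM /= !conjCK; ring.
Qed.

Definition weight (a : 'I_2) (x : 'I_3) (k : 'I_2) : R :=
  match val x with
  | 0%N | 1%N => 2^-1
  | _ => if val k == val a then 1 else 0
  end.

Lemma eigvec_weight a x k : (weight a x k)%:C = eigvec a x k 0 * (eigvec a x k 0)^*.
Proof.
have i2 := invsqrt2_sqr.
case: x => [[|[|[|//]]] ?]; case: a => [[|[|//]] ?]; case: (ord2P k) => ->;
  rewrite /weight /eigvec /= !mxE /= ?expr0 ?expr1;
  by apply/eqP; rewrite eq_complex /=; apply/andP; split; apply/eqP; lra.
Qed.

Lemma steered_dot (c1 s1 c2 s2 : R) a b x y :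
  ((steered c1%:C s1%:C a b x y)^t* *m steered c2%:C s2%:C a b x y) 0 0 =
  (c1 * c2 * (weight a x 0 * weight b y 0) + s1 * s2 * (weight a x 1 * weight b y 1))%:C.
Proof.
rewrite [RHS]rmorphD !rmorphM /= !eigvec_weight mxE sum_ord2 !mxE /ket2 /= !rmorphM /=.
by rewrite !conjCK !conj_real_complex; ring.
Qed.

End GHZAssemblages.

Arguments invsqrt2 {R}.
Arguments weight {R}.

Definition component_fidelity (R : rcfType) (P F c s q0 q1 : R) : R :=
  Num.sqrt (P * ((q0 + q1) / 2) ^+ 2 + F * (c * q0 + s * q1) ^+ 2 / 2).

Lemma fid_term_dist (R : realType) (theta : R) N x y :
  0 <= P_success theta N -> 0 <= P_fail theta N ->
  fid_term (sigma_dist theta N) (@sigma_GHZ R) (x, y) =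
  \sum_(a < 2) \sum_(b < 2) component_fidelity (P_success theta N) (P_fail theta N)
    (cos theta) (sin theta) (weight a x 0 * weight b y 0) (weight a x 1 * weight b y 1).
Proof.
move=> P0 F0; apply: eq_bigr => a _; apply: eq_bigr => b _ /=.
pose g := steered (@invsqrt2 R)%:C invsqrt2%:C a b x y.
pose h := steered (cos theta)%:C (sin theta)%:C a b x y.
have EG : sigma_GHZ R a b x y = g *m g^t* by apply: assemblage_of_ket.
have EH : sigma_GGHZ theta a b x y = h *m h^t* by apply: assemblage_of_ket.
rewrite /sigma_dist EG EH (scale_outer _ P0) (scale_outer _ F0) fidelity_outer_sum2.
rewrite -!scale_outer // quad_form_outer !steered_dot -rmorphXn -!rmorphM -rmorphD /=.
rewrite /component_fidelity; congr Num.sqrt.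
set q0 := _ * weight b y 0; set q1 := _ * weight b y 1.
transitivity (P_success theta N * ((invsqrt2 * invsqrt2) * (q0 + q1)) ^+ 2 +
  P_fail theta N * (invsqrt2 * invsqrt2) * (cos theta * q0 + sin theta * q1) ^+ 2).
  by ring.
by rewrite invsqrt2_sqr; field.
Qed.

Lemma sqrtr_add_le (R : rcfType) (a b w : R) : 0 <= a -> 0 <= b ->
  w ^+ 2 <= 4 * a * b -> Num.sqrt (a + b + w) <= Num.sqrt a + Num.sqrt b.
Proof.
move=> a0 b0 wab.
have w_le : w <= 2 * (Num.sqrt a * Num.sqrt b).
  have sqrt4 : Num.sqrt 4 = 2 :> R.
    by rewrite (_ : 4 = 2 ^+ 2) ?sqrtr_sqr ?ger0_norm // expr2 -natrM.
  apply: le_trans (ler_norm w) _.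
  by rewrite -sqrtr_sqr -sqrt4 -!sqrtrM ?mulr_ge0 // ?mulrA ler_wsqrtr.
apply: le_trans (ler_wsqrtr (_ : _ <= (Num.sqrt a + Num.sqrt b) ^+ 2)) _.
  by rewrite sqrrD !sqr_sqrtr // -mulr_natr; lra.
by rewrite sqrtr_sqr ger0_norm // addr_ge0 ?sqrtr_ge0.
Qed.

Section ComponentFidelity.
Variables (R : rcfType) (P F c s : R).
Local Notation cf := (component_fidelity P F c s).

Lemma component_fidelity_scale t q0 q1 : 0 <= t -> cf (t * q0) (t * q1) = t * cf q0 q1.
Proof.
move=> t0; rewrite /component_fidelity -[t in RHS](ger0_norm t0) -sqrtr_sqr -sqrtrM ?sqr_ge0 //.
by congr Num.sqrt; ring.
Qed.

Lemma component_fidelity00 : cf 0 0 = 0.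
Proof. by rewrite /component_fidelity !(mulr0, addr0, mul0r, expr0n) /= sqrtr0. Qed.

Lemma component_fidelity_flat :
  4 * cf (2^-1 * 2^-1) (2^-1 * 2^-1) = Num.sqrt (P + F * (c + s) ^+ 2 / 2).
Proof.
rewrite -component_fidelity_scale ?ler0n // /component_fidelity.
by congr Num.sqrt; field.
Qed.

Lemma component_fidelity_flat_le : 0 <= P -> 0 <= F ->
  4 * cf (2^-1 * 2^-1) (2^-1 * 2^-1) <= cf 1 0 + cf 0 1.
Proof.
move=> P0 F0; rewrite component_fidelity_flat /component_fidelity.
have -> : P + F * (c + s) ^+ 2 / 2 = P * ((1 + 0) / 2) ^+ 2 + F * (c * 1 + s * 0) ^+ 2 / 2
  + (P * ((0 + 1) / 2) ^+ 2 + F * (c * 0 + s * 1) ^+ 2 / 2) + (P / 2 + F * c * s) by field.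
apply: sqrtr_add_le; rewrite ?(mulr1, mulr0, addr0, add0r).
- nra.
- nra.
have PFcs : 0 <= P * F * (c - s) ^+ 2 / 2.
  by rewrite divr_ge0 ?ler0n // mulr_ge0 ?sqr_ge0 ?mulr_ge0.
by rewrite -subr_ge0 (_ : _ - _ = P * F * (c - s) ^+ 2 / 2) //; field.
Qed.

End ComponentFidelity.

Section DistilledAssemblage.
Variables (R : realType) (theta : R) (N : nat).
Hypotheses (Ps_ge0 : 0 <= P_success theta N) (Pf_ge0 : 0 <= P_fail theta N).
Local Notation cf := (component_fidelity (P_success theta N) (P_fail theta N)
                        (cos theta) (sin theta)).

Lemma fid_term_dist_min xy :
  fid_term (sigma_dist theta N) (@sigma_GHZ R) (ord0, ord0) <=
  fid_term (sigma_dist theta N) (@sigma_GHZ R) xy.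
Proof.
case: xy => x y; rewrite !fid_term_dist //.
have flat := component_fidelity_flat_le (cos theta) (sin theta) Ps_ge0 Pf_ge0.
have half_ge0 : 0 <= 2^-1 :> R by rewrite invr_ge0 ler0n.
have h10 : cf 2^-1 0 = 2^-1 * cf 1 0.
  by rewrite -component_fidelity_scale ?mulr1 ?mulr0.
have h01 : cf 0 2^-1 = 2^-1 * cf 0 1.
  by rewrite -component_fidelity_scale ?mulr1 ?mulr0.
have cf00 := component_fidelity00 (P_success theta N) (P_fail theta N) (cos theta) (sin theta).
case: x => [[|[|[|//]]] ?]; case: y => [[|[|[|//]]] ?];
  rewrite !sum_ord2 /weight /= ?mulr1 ?mul1r ?mulr0 ?mul0r ?cf00 ?h01 ?h10; lra.
Qed.

Lemma assemblage_fidelity_dist :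
  assemblage_fidelity (sigma_dist theta N) (@sigma_GHZ R) =
  Num.sqrt (P_success theta N + P_fail theta N * (cos theta + sin theta) ^+ 2 / 2).
Proof.
rewrite /assemblage_fidelity bigmin_eq_id; last by move=> xy _; apply: fid_term_dist_min.
by rewrite fid_term_dist // !sum_ord2 /weight /= -component_fidelity_flat; lra.
Qed.

End DistilledAssemblage.

Theorem theorem2 (R : realType) (theta : R) (N : nat) :
  0 < theta -> theta < pi / 4%:R -> (2 <= N)%N ->
  assemblage_fidelity (sigma_dist theta N) (@sigma_GHZ R) =
  Num.sqrt (1 - 2%:R^-1 * (1 - sin (2%:R * theta)) * cos (2%:R * theta) ^+ N.-1).
Proof.
move=> theta_gt0 theta_lt _.
have cos2_ge0 : 0 <= cos (2%:R * theta).
  by apply: cos_ge0_pihalf; have := @pi_gt0 R; lra.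
have Pf : P_fail theta N = cos (2%:R * theta) ^+ N.-1.
  by rewrite /P_fail [2%:R * theta]mulr_natl cos_mulr2n cos2sin2; congr (_ ^+ _); ring.
have Pf_ge0 : 0 <= P_fail theta N by rewrite Pf exprn_ge0.
have Pf_le1 : P_fail theta N <= 1 by rewrite Pf exprn_ile1 // cos_le1.
rewrite assemblage_fidelity_dist ?subr_ge0 // -Pf mulr_natl sin_mulr2n.
rewrite sqrrD (addrAC (cos theta ^+ 2)) cos2Dsin2 /P_success.
by congr Num.sqrt; field.
Qed.
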